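(* Let $\mathcal{R}$ be the family of all halfplanes. For $k=2$ and any $m \geq 2$, we do not have hitting $2$-cliques with respect to $\mathcal{R}$; that is, there exists a finite point set $V \subset \mathbb{R}^2$ such that for every collection of pairwise disjoint $2$-element subsets of $V$ some hyperedge of $\mathcal{H}(V,\mathcal{R},m)$ contains none of these subsets.
   Context: For a finite $V \subset \mathbb{R}^2$ and a family $\mathcal{R}$ of subsets of $\mathbb{R}^2$, $\mathcal{H}(V,\mathcal{R},m)$ is the hypergraph on $V$ whose hyperedges are the sets $V \cap R$, $R \in \mathcal{R}$, of size exactly $m$. For fixed $k,m,\mathcal{R}$ we say we have hitting $k$-cliques if for every finite $V \subset \mathbb{R}^2$ there exist pairwise disjoint $k$-element subsets of $V$ such that every hyperedge of $\mathcal{H}(V,\mathcal{R},m)$ fully contains at least one of them. *)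

From HB Require Import structures.
From mathcomp Require Import all_boot all_order all_algebra.
From mathcomp Require Import finmap.
From mathcomp Require Import reals.
Set Implicit Arguments. Unset Strict Implicit. Unset Printing Implicit Defensive.
Import Order.TTheory GRing.Theory Num.Theory.
Local Open Scope ring_scope.

Section Defs.
Variable R : realType.

Definition point := (R * R)%type.

Definition region := point -> bool.

Definition halfplanes : region -> Prop :=
  fun r => exists a b c : R, (a, b) != (0, 0) /\
    forall p : point, r p = (a * p.1 + b * p.2 <= c).

Definition hyperedge (V : {fset point}) (Rfam : region -> Prop) (m : nat)
    (e : {fset point}) : Prop :=
  (exists r, Rfam r /\ e = [fset p in V | r p]%fset) /\ #|` e| = m.

Definition hitting_cliques_for (k m : nat) (Rfam : region -> Prop)
    (V : {fset point}) : Prop :=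
  exists C : {fset {fset point}},
    (forall P, P \in C -> (P `<=` V)%fset /\ #|` P| = k) /\
    (forall P Q, P \in C -> Q \in C -> P != Q -> [disjoint P & Q]%fset) /\
    (forall e, hyperedge V Rfam m e -> exists2 P, P \in C & (P `<=` e)%fset).

End Defs.

From HB Require Import structures.
From mathcomp Require Import all_boot all_order all_algebra.
From mathcomp Require Import finmap.
From mathcomp Require Import reals.
From mathcomp Require Import zify ring.
Import Order.TTheory GRing.Theory Num.Theory.
Set Implicit Arguments. Unset Strict Implicit. Unset Printing Implicit Defensive.

(* Put the points on m levels: level j consists of the m^j points (t, t^2 - d^2)
   with t = d (2k + 1) and d = m^(m-1-j), just below the parabola y = x^2.  The
   halfplane below the tangent to y = x^2 at the odd abscissa s = 2u + 1 contains
   exactly the points with |t - s| <= d, i.e. on each level the single point with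
   k = u / d.  These halfplanes therefore cut out precisely the root-to-leaf paths
   of the complete m-ary tree of depth m, each a hyperedge of size m.  Given
   disjoint pairs, grow a path from the root: each of the l + 1 < m nodes chosen
   so far is paired with at most one point, so some child of the last node is
   paired with none of them.  The resulting hyperedge contains no pair. *)

Section FunctionalRelation.
Variables (T : eqType) (r : rel T).
Hypothesis r_functional : forall x y z, r x y -> r x z -> y = z.

Lemma count_rel_le1 a (Q : seq T) : uniq Q -> count (r a) Q <= 1.
Proof.
move=> uQ; case: (boolP (has (r a) Q)) => [/hasP [q _ raq]|]; last first.
  by rewrite has_count -leqNgt => /leq_trans; apply.
rewrite (eq_count (a2 := pred1 q)) ?count_uniq_mem ?leq_b1 // => q' /=.
by apply/idP/eqP => [/(r_functional raq) <-|->].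
Qed.

Lemma count_has_rel (A Q : seq T) : uniq Q ->
  count (fun q => has (r^~ q) A) Q <= size A.
Proof.
move=> uQ; elim: A => [|a A IH] /=; first by rewrite count_pred0.
rewrite -add1n (leq_trans _ (leq_add (count_rel_le1 a uQ) IH)) //.
by rewrite -count_predUI leq_addr.
Qed.

End FunctionalRelation.

Section Tree.
Variables (b n : nat).

(* Level j < n of the complete b-ary tree of depth n has the nodes k < b^j, and the
   children of k are the nodes b k + c, c < b.  A leaf u < b^(n-1) stands for its
   root-to-leaf path, whose node on level j is [ancestor u j]. *)
Definition scale j := b ^ (n.-1 - j).
Definition ancestor u j := u %/ scale j.
Definition child u l c := (b * ancestor u l + c) * scale l.+1.

Lemma scale_inj : 1 < b -> {in gtn n &, injective scale}.
Proof.
move=> b_gt1 i j; rewrite !inE => i_lt j_lt /eqP.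
by rewrite eqn_exp2l // => /eqP; lia.
Qed.

Hypothesis b_gt0 : 0 < b.

Lemma scale_gt0 j : 0 < scale j.
Proof. by rewrite expn_gt0 b_gt0. Qed.

Lemma expn_scale j : j <= n.-1 -> b ^ n.-1 = b ^ j * scale j.
Proof. by move=> jn; rewrite -expnD; congr (_ ^ _); lia. Qed.

Lemma ancestor_lt u j : u < b ^ n.-1 -> j <= n.-1 -> ancestor u j < b ^ j.
Proof. by move=> ub jn; rewrite ltn_divLR ?scale_gt0 // -expn_scale. Qed.

Lemma child_lt u l c : l < n.-1 -> c < b -> u < b ^ n.-1 -> child u l c < b ^ n.-1.
Proof.
move=> ln cb ub; have := ancestor_lt ub (ltnW ln).
rewrite (expn_scale ln) ltn_pmul2r ?scale_gt0 // expnS; nia.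
Qed.

Lemma ancestor_child_last u l c : ancestor (child u l c) l.+1 = b * ancestor u l + c.
Proof. by rewrite /ancestor mulnK ?scale_gt0. Qed.

Lemma ancestor_child u l c i : l < n.-1 -> c < b -> i <= l ->
  ancestor (child u l c) i = ancestor u i.
Proof.
move=> ln cb il; rewrite /ancestor /child.
have {1}-> : scale i = (b * b ^ (l - i)) * scale l.+1.
  by rewrite -expnS -expnD; congr (_ ^ _); lia.
rewrite divnMr ?scale_gt0 // divnMA [b * _]mulnC.
rewrite divnMDl // (divn_small cb) addn0 -divnMA /scale -expnD.
by congr (_ %/ (_ ^ _)); lia.
Qed.

Section UnmatchedPath.
Variables (T : eqType) (vertex : nat -> nat -> T) (r : rel T).
Hypothesis vertex_inj : forall j, injective (vertex j).
Hypothesis r_functional : forall x y z, r x y -> r x z -> y = z.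
Hypothesis depth_le_branching : n <= b.

Definition path_vertex u j := vertex j (ancestor u j).

Lemma exists_unmatched_path l : l < n -> exists2 u, u < b ^ n.-1 &
  forall i j, i < j <= l -> ~~ r (path_vertex u i) (path_vertex u j).
Proof.
elim: l => [_|l IH ln].
  by exists 0; rewrite ?expn_gt0 ?b_gt0 // => i j; lia.
have [u ub u_unmatched] := IH (ltnW ln).
pose children := [seq vertex l.+1 (b * ancestor u l + c) | c <- iota 0 b].
pose prefix := [seq path_vertex u i | i <- iota 0 l.+1].
have uniq_children : uniq children.
  by rewrite map_inj_uniq ?iota_uniq // => c c' /vertex_inj /addnI.
have : ~~ all (fun q => has (r^~ q) prefix) children.
  rewrite all_count ltn_eqF //.
  apply: leq_ltn_trans (count_has_rel r_functional prefix uniq_children) _.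
  by rewrite !size_map !size_iota; lia.
case/allPn => q /mapP [c]; rewrite mem_iota => /andP [_ cb] ->.
move=> /hasPn unmatched_child; exists (child u l c); first by rewrite child_lt //; lia.
have prefix_fixed i : i <= l -> path_vertex (child u l c) i = path_vertex u i.
  by move=> il; rewrite /path_vertex ancestor_child //; lia.
move=> i j /andP [ij]; rewrite leq_eqVlt ltnS => /predU1P [jE | jl].
  subst j; rewrite prefix_fixed; last by lia.
  rewrite /path_vertex ancestor_child_last.
  by apply: unmatched_child; apply: map_f; rewrite mem_iota; lia.
by rewrite !prefix_fixed; [apply: u_unmatched; rewrite ij | lia | lia].
Qed.

End UnmatchedPath.
End Tree.

Local Open Scope fset_scope.

Lemma cardfs2P (K : choiceType) (P : {fset K}) :
  #|` P| = 2 -> exists x y, x != y /\ P = [fset x; y].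
Proof.
move=> P2; have /fset0Pn [x xP] : P != fset0 by rewrite -cardfs_gt0 P2.
have /cardfs1P [y Py] : #|` P `\ x| == 1.
  by move: (cardfsD1 x P); rewrite xP P2 => /eqP; rewrite eqSS eq_sym.
have : y \in P `\ x by rewrite Py fset11.
rewrite in_fsetD1 => /andP [yx yP]; exists x, y; split; first by rewrite eq_sym.
by rewrite -Py fsetD1K.
Qed.

Section Partners.
Variables (K : choiceType) (C : {fset {fset K}}).
Hypothesis C_card2 : forall P, P \in C -> #|` P| = 2.
Hypothesis C_disjoint : forall P Q, P \in C -> Q \in C -> P != Q -> [disjoint P & Q].

Definition partners x y := has (fun P : {fset K} => [&& x \in P, y \in P & x != y]) C.

Lemma partnersP x y :
  reflect (exists2 P, P \in C & [/\ x \in P, y \in P & x != y]) (partners x y).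
Proof.
apply: (iffP hasP) => [[P PC /and3P [xP yP xy]]|[P PC [xP yP xy]]]; exists P => //.
by rewrite xP yP.
Qed.

Lemma partners_sym x y : partners x y -> partners y x.
Proof.
case/partnersP => P PC [xP yP xy]; apply/partnersP; exists P => //.
by rewrite eq_sym.
Qed.

Lemma partners_functional x y z : partners x y -> partners x z -> y = z.
Proof.
case/partnersP => P PC [xP yP xy]; case/partnersP => Q QC [xQ zQ xz].
have PQ : P = Q.
  apply/eqP; apply: contraTT isT => /(C_disjoint PC QC) /fdisjointP /(_ x xP).
  by rewrite xQ.
subst Q; have [a [a' [_ defP]]] := cardfs2P (C_card2 PC).
move: xP yP zQ xy xz; rewrite defP !in_fset2.
by do 3!case/orP=> /eqP ->; rewrite ?eqxx.
Qed.

End Partners.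

Lemma near_odd_multipleE (d k u : nat) : 0 < d ->
  (d * k.*2.+1 <= u.*2.+1 + d) && (u.*2.+1 <= d * k.*2.+1 + d) = (k == u %/ d).
Proof.
move=> d_gt0; have u_eq := divn_eq u d; have r_lt := ltn_pmod u d_gt0.
move: (u %/ d) (u %% d) u_eq r_lt => q r -> r_lt.
case: (ltngtP k q) => [kq|qk|->]; last by apply/andP; split; nia.
- apply/negbTE; rewrite negb_and -!ltnNge; apply/orP; right.
  have : k.+1 * d <= q * d by rewrite leq_mul2r kq orbT.
  nia.
- apply/negbTE; rewrite negb_and -!ltnNge; apply/orP; left.
  have : q.+1 * d <= k * d by rewrite leq_mul2r qk orbT.
  nia.
Qed.

Local Open Scope ring_scope.

Section Parabola.
Variable R : realType.

Definition parabola_point (d k : nat) : point R :=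
  let t := (d * k.*2.+1)%:R in (t, t ^+ 2 - d%:R ^+ 2).

Definition below_tangent (s : R) : region R :=
  fun p => - (s *+ 2) * p.1 + 1 * p.2 <= - s ^+ 2.

Lemma below_tangent_halfplane s : halfplanes (below_tangent s).
Proof.
exists (- (s *+ 2)), 1, (- s ^+ 2); split=> //.
by rewrite xpair_eqE oner_eq0 andbF.
Qed.

Lemma below_tangent_shifted_parabola s t d : 0 <= d ->
  below_tangent s (t, t ^+ 2 - d ^+ 2) = (`|t - s| <= d).
Proof.
move=> d_ge0; rewrite -ler_sqr ?nnegrE ?normr_ge0 // real_normK ?num_real //.
rewrite /below_tangent /= -[in LHS]subr_ge0 -[in RHS]subr_ge0.
by congr (_ <= _); ring.
Qed.

Lemma below_tangent_parabola_point u d k : (0 < d)%N ->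
  below_tangent (u.*2.+1)%:R (parabola_point d k) = (k == u %/ d)%N.
Proof.
move=> d_gt0; rewrite below_tangent_shifted_parabola // ler_distl lerBlDr.
by rewrite -!natrD !ler_nat andbC near_odd_multipleE.
Qed.

Lemma parabola_point_inj d : (0 < d)%N -> injective (parabola_point d).
Proof.
move=> d_gt0 k k' [/eqP]; rewrite eqr_nat eqn_pmul2l // eqSS.
by rewrite (inj_eq double_inj) => /eqP.
Qed.

Lemma parabola_point_level_inj d d' k k' :
  parabola_point d k = parabola_point d' k' -> d = d'.
Proof.
case=> ->; move/addrI/oppr_inj/eqP; rewrite -!natrX eqr_nat eqn_exp2r //.
by move/eqP.
Qed.

End Parabola.

Section Construction.
Variables (R : realType) (m : nat).
Hypothesis m_gt1 : (1 < m)%N.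

Definition level_vertex j k : point R := parabola_point R (scale m m j) k.

Lemma level_vertex_inj j : injective (level_vertex j).
Proof. by apply: parabola_point_inj; rewrite scale_gt0 // ltnW. Qed.

Definition tree_points : {fset point R} :=
  [fset level_vertex j k | j in iota 0 m, k in iota 0 (m ^ j)].

Definition leaf_edge u : {fset point R} :=
  [fset path_vertex m m level_vertex u j | j in iota 0 m].

Lemma leaf_edgeE u : (u < m ^ m.-1)%N ->
  [fset p in tree_points | below_tangent (u.*2.+1)%:R p] = leaf_edge u.
Proof.
move=> u_lt; have m_gt0 : (0 < m)%N by apply: ltnW. apply/fsetP => p; rewrite !inE.
apply/andP/imfsetP => [[/imfset2P [j jm [k _ ->]]]|[j jm ->]].
  by rewrite below_tangent_parabola_point ?scale_gt0 // => /eqP ->; exists j.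
split; last by rewrite below_tangent_parabola_point ?scale_gt0.
apply/imfset2P; exists j => //; exists (ancestor m m u j) => //.
by move: jm; rewrite !mem_iota !leq0n !add0n => jm; rewrite ancestor_lt //; lia.
Qed.

Lemma leaf_edge_hyperedge u : (u < m ^ m.-1)%N ->
  hyperedge tree_points (@halfplanes R) m (leaf_edge u).
Proof.
move=> u_lt; split.
  exists (below_tangent (u.*2.+1)%:R); split; first exact: below_tangent_halfplane.
  by rewrite leaf_edgeE.
rewrite card_in_imfset /= ?undup_id ?iota_uniq ?size_iota // => i j.
rewrite !mem_iota => /andP [_ i_lt] /andP [_ j_lt].
by move/parabola_point_level_inj/(scale_inj m_gt1); apply.
Qed.

End Construction.

Theorem corollary6 (R : realType) (m : nat) (hm : (2 <= m)%N) :
  exists V : {fset point R},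
    forall C : {fset {fset point R}},
      (forall P, P \in C -> (P `<=` V)%fset /\ #|` P| = 2) ->
      (forall P Q, P \in C -> Q \in C -> P != Q -> [disjoint P & Q]%fset) ->
      exists e : {fset point R},
        hyperedge V (@halfplanes R) m e /\ (forall P, P \in C -> ~ (P `<=` e)%fset).
Proof.
exists (tree_points R m) => C C_sub C_disjoint.
have C_card2 P : P \in C -> #|` P| = 2 by case/C_sub.
have m_pred_lt : (m.-1 < m)%N by rewrite ltn_predL ltnW.
have [u u_lt unmatched] := exists_unmatched_path (ltnW hm) (level_vertex_inj hm)
  (partners_functional C_card2 C_disjoint) (leqnn m) m_pred_lt.
exists (leaf_edge R m u); split=> [|P PC /fsubsetP P_sub].
  exact: leaf_edge_hyperedge.
have [x [y [xy defP]]] := cardfs2P (C_card2 P PC).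
have [xP yP] : x \in P /\ y \in P by rewrite defP fset21 fset22.
have xy_partners : partners C x y by apply/partnersP; exists P.
have /imfsetP [i i_lt def_x] := P_sub x xP.
have /imfsetP [j j_lt def_y] := P_sub y yP.
move: i_lt j_lt xy xy_partners; rewrite def_x def_y !mem_iota.
move=> /andP [_ i_lt] /andP [_ j_lt].
case: (ltngtP i j) => [ij|ji|->]; last by rewrite eqxx.
- by move=> _; apply/negP/unmatched; rewrite ij; lia.
- by move=> _ /partners_sym; apply/negP/unmatched; rewrite ji; lia.
Qed.
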